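(* Let $M$ and $M'$ be two stable matchings in an instance $I$ of SPA-S, and let $M^\lor$ be the assignment defined from $M,M'$ in the context. If a project $p_j$ is undersubscribed in $M^\lor$, then $p_j$ is undersubscribed in at least one of $M$ and $M'$.
   Context: An instance $I$ of SPA-S consists of a finite set $\mathcal{S}$ of students, a finite set $\mathcal{P}$ of projects and a finite set $\mathcal{L}$ of lecturers. Each student $s_i$ ranks a subset $A_i\subseteq\mathcal{P}$ (its acceptable projects) in strict order. Each project is offered by exactly one lecturer; lecturer $l_k$ offers a nonempty set $P_k\subseteq\mathcal{P}$, the $P_k$ partitioning $\mathcal{P}$. Each lecturer $l_k$ ranks in strict order the students who find at least one project of $P_k$ acceptable. Projects have capacities $c_j\in\mathbb{Z}^+$, lecturers have capacities $d_k\in\mathbb{Z}^+$ with $\max\{c_j:p_j\in P_k\}\le d_k\le\sum\{c_j:p_j\in P_k\}$. A pair $(s_i,p_j)$, $p_j$ offered by $l_k$, is acceptable if $p_j\in A_i$ and $s_i$ is on $l_k$'s list. A matching $M$ is a set of acceptable pairs with each student in at most one pair, $|M(p_j)|\le c_j$, $|M(l_k)|\le d_k$, where for an assignment $M$ (a set of acceptable pairs), $M(s_i)$, $M(p_j)$, $M(l_k)$ denote the project of $s_i$, the students assigned to $p_j$, and the students assigned to projects of $l_k$. Undersubscribed/full means fewer than/exactly capacity many assigned students. An acceptable pair $(s_i,p_j)\notin M$ ($p_j$ offered by $l_k$) blocks $M$ if ($s_i$ is unassigned or prefers $p_j$ to $M(s_i)$) and one of: (P1) $p_j$ and $l_k$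 undersubscribed; (P2) $p_j$ undersubscribed, $l_k$ full, $s_i\in M(l_k)$; (P3) $p_j$ undersubscribed, $l_k$ full, $l_k$ prefers $s_i$ to the worst student of $M(l_k)$; (P4) $p_j$ full and $l_k$ prefers $s_i$ to the worst student of $M(p_j)$. $M$ is stable if it has no blocking pair. Given stable matchings $M,M'$, $M^\lor$ is the assignment in which each student unassigned in both $M$ and $M'$ is unassigned, each student assigned to the same project in both is assigned to that project, and every other student is assigned to the worse (in her preference) of her projects in $M$ and $M'$. *)

(* SPA-S instances over finite types of students S,
   projects P and lecturers L. *)
From mathcomp Require Import all_boot.
Set Implicit Arguments. Unset Strict Implicit. Unset Printing Implicit Defensive.

Record spas (S P L : finType) := SPAS {
  spref : S -> seq P;     (* student's strict preference list (best first) *)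
  lpref : L -> seq S;     (* lecturer's strict preference list (best first) *)
  offer : P -> L;
  pcap  : P -> nat;
  lcap  : L -> nat
}.

Section SPAS.
Variables (S P L : finType) (I : spas S P L).

Definition wf_instance : Prop :=
  [/\ (forall s, uniq (spref I s)),
      (forall l, uniq (lpref I l)),
      (forall l, exists p, offer I p = l) &
      (
      forall l s, (s \in lpref I l) = has (fun p => offer I p == l) (spref I s))] /\
  [/\ (forall p, 0 < pcap I p),
      (forall l, 0 < lcap I l) &
      (forall l, \max_(p | offer I p == l) pcap I p <= lcap I l
                 <= \sum_(p | offer I p == l) pcap I p)].

Definition sprefers (s : S) (p q : P) : bool :=
  index p (spref I s) < index q (spref I s).
Definition lprefers (l : L) (s t : S) : bool :=
  index s (lpref I l) < index t (lpref I l).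

Definition acceptable (s : S) (p : P) : bool :=
  (p \in spref I s) && (s \in lpref I (offer I p)).

Definition assignment := S -> option P.

Definition Mp (M : assignment) (p : P) : {set S} := [set s | M s == Some p].
Definition Ml (M : assignment) (l : L) : {set S} :=
  [set s | if M s is Some p then offer I p == l else false].

Definition is_assignment (M : assignment) : Prop :=
  forall s p, M s = Some p -> acceptable s p.

Definition is_matching (M : assignment) : Prop :=
  [/\ is_assignment M,
      (forall p, #|Mp M p| <= pcap I p) &
      (forall l, #|Ml M l| <= lcap I l)].

Definition p_under (M : assignment) (p : P) : bool := #|Mp M p| < pcap I p.
Definition p_full (M : assignment) (p : P) : bool := #|Mp M p| == pcap I p.
Definition l_under (M : assignment) (l : L) : bool := #|Ml M l| < lcap I l.
Definition l_full (M : assignment) (l : L) : bool := #|Ml M l| == lcap I l.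

Definition worst_of (l : L) (A : {set S}) (t : S) : bool :=
  (t \in A) && [forall u in A, index u (lpref I l) <= index t (lpref I l)].

Definition prefers_to_worst (l : L) (s : S) (A : {set S}) : bool :=
  [exists t, worst_of l A t && lprefers l s t].

Definition blocks (M : assignment) (s : S) (p : P) : bool :=
  let l := offer I p in
  [&& acceptable s p, M s != Some p,
      (if M s is Some q then sprefers s p q else true) &
      [|| p_under M p && l_under M l,
          [&& p_under M p, l_full M l & s \in Ml M l],
          [&& p_under M p, l_full M l & prefers_to_worst l s (Ml M l)]
        | p_full M p && prefers_to_worst l s (Mp M p)]].                (* P4 *)

Definition stable (M : assignment) : Prop :=
  is_matching M /\ forall s p, ~~ blocks M s p.

Definition mvee (M M' : assignment) : assignment := fun s =>
  match M s, M' s with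
  | None, None => None
  | Some p, None => Some p
  | None, Some q => Some q
  | Some p, Some q => if p == q then Some p
                      else if sprefers s p q then Some q else Some p
  end.

End SPAS.

(* If p stays full in both M and M' but loses places in M^vee, some s in M(p)
   and some s' in M'(p) are moved away from p in M^vee, each towards a project
   it likes less than p.  Stability of M' at the full project p (condition P4)
   forces l, the lecturer of p, to rank s' no better than s, and symmetrically
   stability of M forces l to rank s no better than s'.  Hence s = s', who then
   holds p in both matchings and therefore keeps p in M^vee. *)

From mathcomp Require Import all_boot.

Set Implicit Arguments.
Unset Strict Implicit.
Unset Printing Implicit Defensive.

Lemma index_inj_in (T : eqType) (s : seq T) (x y : T) :
  x \in s -> index x s = index y s -> x = y.
Proof.
move=> xs exy.
have ys : y \in s by rewrite -index_mem -exy index_mem.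
by rewrite -(nth_index x xs) exy (nth_index x ys).
Qed.

Section StableMvee.
Variables (S P L : finType) (I : spas S P L).

Local Notation rank l s := (index s (lpref I l)).

Lemma sprefers_neq s p q : sprefers I s p q -> p != q.
Proof. by apply: contraTneq => ->; rewrite /sprefers ltnn. Qed.

Lemma sprefers_asym s p q : sprefers I s p q -> ~~ sprefers I s q p.
Proof. by rewrite /sprefers => /ltnW; rewrite leqNgt. Qed.

Lemma sprefers_total s p q :
  p \in spref I s -> p != q -> ~~ sprefers I s p q -> sprefers I s q p.
Proof.
move=> ps npq; rewrite /sprefers -leqNgt leq_eqVlt => /orP[/eqP eqp|//].
by rewrite (index_inj_in ps (esym eqp)) eqxx in npq.
Qed.

Lemma mvee_sym (M M' : assignment S P) :
  is_assignment I M -> mvee I M M' =1 mvee I M' M.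
Proof.
move=> asgM s; rewrite /mvee.
case Ms: (M s) => [p|]; case: (M' s) => [q|] //.
have ps : p \in spref I s by have /andP[] := asgM _ _ Ms.
rewrite [q == p]eq_sym; case: eqP => [-> //|/eqP npq].
case: ifPn => [pq | npq_pref].
  by rewrite (negbTE (sprefers_asym pq)).
by rewrite (sprefers_total ps npq npq_pref).
Qed.

Lemma mvee_same (M M' : assignment S P) s p :
  M s = Some p -> M' s = Some p -> mvee I M M' s = Some p.
Proof. by rewrite /mvee => -> ->; case: eqP. Qed.

Lemma mvee_moved (M M' : assignment S P) s p :
  M s = Some p -> mvee I M M' s != Some p ->
  exists2 q, M' s = Some q & sprefers I s p q.
Proof.
rewrite /mvee => ->; case: (M' s) => [q|]; last by rewrite eqxx.
case: (p =P q) => [<-|_]; first by rewrite eqxx.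
by case: ifP => [pq _|_]; [exists q | rewrite eqxx].
Qed.

Lemma p_under_subset (M N : assignment S P) p :
  Mp M p \subset Mp N p -> p_under I N p -> p_under I M p.
Proof. by rewrite /p_under => /subset_leq_card; apply: leq_ltn_trans. Qed.

Lemma matching_p_full (M : assignment S P) p :
  is_matching I M -> ~~ p_under I M p -> p_full I M p.
Proof. by case=> _ capM _; rewrite /p_full /p_under -leqNgt eqn_leq capM. Qed.

Lemma not_prefers_to_worst l s (A : {set S}) :
  ~~ prefers_to_worst I l s A -> {in A, forall t, rank l t <= rank l s}.
Proof.
move=> npw t tA.
have [w wA wmax] := @arg_maxnP _ t (mem A) (fun u => rank l u) tA.
have worst_w : worst_of I l A w by apply/andP; split=> //; apply/forall_inP.
have : ~~ lprefers I l s w.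
  by apply: contra npw => sw; apply/existsP; exists w; rewrite worst_w.
by rewrite /lprefers -leqNgt; apply: leq_trans (wmax t tA).
Qed.

Lemma p_under_lost_student (M N : assignment S P) p :
  ~~ p_under I M p -> p_under I N p -> exists2 s, M s = Some p & N s != Some p.
Proof.
move=> npuM puN.
have /subsetPn[s] : ~~ (Mp M p \subset Mp N p).
  by apply: contra npuM => subMN; apply: p_under_subset subMN puN.
by rewrite !inE => /eqP Ms Ns; exists s.
Qed.

Lemma stable_full_rank (M : assignment S P) s p q t :
  stable I M -> ~~ p_under I M p -> acceptable I s p ->
  M s = Some q -> sprefers I s p q -> t \in Mp M p ->
  rank (offer I p) t <= rank (offer I p) s.
Proof.
case=> matM nbM npuM acc Ms pq; apply: not_prefers_to_worst.
apply: contra (nbM s p) => ptw.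
rewrite /blocks acc Ms pq (matching_p_full matM npuM) ptw !orbT !andbT /=.
by rewrite (inj_eq (@Some_inj _)) eq_sym (sprefers_neq pq).
Qed.

Lemma mvee_moved_rank (M M' : assignment S P) p s t :
  is_assignment I M -> stable I M' -> ~~ p_under I M' p ->
  M s = Some p -> mvee I M M' s != Some p -> M' t = Some p ->
  rank (offer I p) t <= rank (offer I p) s.
Proof.
move=> asgM stM' npuM' Ms mv_s M't.
have [q M's pq] := mvee_moved Ms mv_s.
by apply: stable_full_rank stM' npuM' (asgM _ _ Ms) M's pq _; rewrite inE M't.
Qed.

End StableMvee.

Theorem lemma10 (S P L : finType) (I : spas S P L)
  (M M' : assignment S P) (p : P) :
  wf_instance I -> stable I M -> stable I M' ->
  p_under I (mvee I M M') p ->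
  p_under I M p \/ p_under I M' p.
Proof.
move=> _ stM stM' under_mv.
have [[asgM _ _] _] := stM; have [[asgM' _ _] _] := stM'.
case: (boolP (p_under I M p)) => [|fullM]; first by left.
case: (boolP (p_under I M' p)) => [|fullM']; first by right.
have [s Ms mv_s] := p_under_lost_student fullM under_mv.
have [t M't mv_t] := p_under_lost_student fullM' under_mv.
rewrite mvee_sym // in mv_t.
have le_ts := mvee_moved_rank asgM stM' fullM' Ms mv_s M't.
have le_st := mvee_moved_rank asgM' stM fullM M't mv_t Ms.
have s_ranked : s \in lpref I (offer I p) by have /andP[] := asgM _ _ Ms.
have est : s = t.
  by apply: index_inj_in s_ranked _; apply/eqP; rewrite eqn_leq le_st le_ts.
by rewrite -est in M't; rewrite (mvee_same I Ms M't) eqxx in mv_s.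
Qed.
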